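(* Let $\phi\colon\mathbb{R}\to\mathbb{R}$ be an increasing homeomorphism with $\phi(0)=0$, let $f\colon\mathbb{R}\to\mathbb{R}$ be continuous, and let $h\colon[0,T]\times\mathbb{R}\to\mathbb{R}$ be a Carathéodory function satisfying: $(A_0)$ for all $t_0\in[0,T]$, $u_0\in\mathbb{R}$ and $\varepsilon>0$ there exists $\delta>0$ such that if $|t-t_0|<\delta$ and $|u-u_0|<\delta$ then $|h(t,u)-h(t,u_0)|<\varepsilon$ for a.e. $t$. Let $b>0$ and $\beta\in\mathfrak{D}$ be such that $$(\phi(\beta'(t)))'+f(\beta(t))\beta'(t)+h(t,\beta(t))\le -b\quad\text{for a.e. }t\in[0,T].$$ Then $\beta$ is a strict upper solution to $(\phi(u'))'+f(u)u'+h(t,u)=0$.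
   Context: $\mathcal{C}^1_T=\{u\in\mathcal{C}^1([0,T]):u(0)=u(T),\,u'(0)=u'(T)\}$ and $\mathfrak{D}=\{u\in\mathcal{C}^1_T:\phi(u')\text{ is absolutely continuous}\}$. A $T$-periodic solution of $(\phi(u'))'+f(u)u'+h(t,u)=0$ is a $u\in\mathfrak{D}$ satisfying the equation a.e. A function $\beta\in\mathfrak{D}$ is a strict upper solution of this equation if $(\phi(\beta'))'+f(\beta)\beta'+h(t,\beta)<0$ for a.e. $t\in[0,T]$ and, whenever $u$ is a $T$-periodic solution with $u(t)\le\beta(t)$ for all $t\in[0,T]$, then $u(t)<\beta(t)$ for all $t\in[0,T]$. A Carathéodory function is measurable in $t$, continuous in $u$, and for each $r>0$ bounded in absolute value on $[0,T]\times[-r,r]$ by an $L^1$ function of $t$. *)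

From HB Require Import structures.
From mathcomp Require Import all_boot all_order all_algebra.
From mathcomp Require Import all_classical all_reals all_analysis.
Set Implicit Arguments. Unset Strict Implicit. Unset Printing Implicit Defensive.
Import Order.TTheory GRing.Theory Num.Theory.
Import numFieldNormedType.Exports.
Local Open Scope classical_set_scope.
Local Open Scope ring_scope.

Section Defs.
Variable R : realType.

Definition I0T (T : R) : set R := [set t | 0 <= t <= T].

Definition incr_homeo_0 (phi : R -> R) : Prop :=
  {homo phi : x y / x < y} /\ continuous phi /\
  (exists psi : R -> R, cancel phi psi /\ cancel psi phi /\ continuous psi) /\
  phi 0 = 0.

Definition Caratheodory (T : R) (h : R -> R -> R) : Prop :=
  (forall u, measurable_fun (I0T T) (fun t => h t u)) /\
  (forall t, I0T T t -> continuous (h t)) /\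
  (forall r, 0 < r -> exists g : R -> R,
      (@lebesgue_measure R).-integrable (I0T T) (fun t => (g t)%:E) /\
      forall t u, I0T T t -> `|u| <= r -> `|h t u| <= g t).

Definition condA0 (T : R) (h : R -> R -> R) : Prop :=
  forall t0 u0 eps, I0T T t0 -> 0 < eps ->
    exists2 delta, 0 < delta &
      {ae @lebesgue_measure R, forall t, I0T T t ->
        forall u, `|t - t0| < delta -> `|u - u0| < delta ->
          `|h t u - h t u0| < eps}.

Definition abs_cont_on (T : R) (g : R -> R) : Prop :=
  forall eps, 0 < eps -> exists2 delta, 0 < delta &
    forall (n : nat) (a b : nat -> R),
      (forall i, (i < n)%N -> 0 <= a i /\ a i <= b i /\ b i <= T) ->
      (forall i, (i.+1 < n)%N -> b i <= a i.+1) ->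
      \sum_(i < n) (b i - a i) < delta ->
      \sum_(i < n) `|g (b i) - g (a i)| < eps.

(* u is in C^1_T with derivative u' : u, u' continuous on [0,T], u has
   derivative u' on ]0,T[ (hence one-sided derivatives u' at 0 and T),
   u(0) = u(T), u'(0) = u'(T). *)
Definition C1T (T : R) (u u' : R -> R) : Prop :=
  {within I0T T, continuous u} /\ {within I0T T, continuous u'} /\
  (forall t, 0 < t < T -> is_derive t 1 u (u' t)) /\
  u 0 = u T /\ u' 0 = u' T.

Definition inD (phi : R -> R) (T : R) (u u' : R -> R) : Prop :=
  C1T T u u' /\ abs_cont_on T (phi \o u').

Definition Lop (phi f : R -> R) (h : R -> R -> R) (u u' : R -> R) (t : R) : R :=
  derive1 (phi \o u') t + f (u t) * u' t + h t (u t).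

Definition periodic_solution (phi f : R -> R) (h : R -> R -> R) (T : R)
    (u u' : R -> R) : Prop :=
  inD phi T u u' /\
  {ae @lebesgue_measure R, forall t, I0T T t ->
     derivable (phi \o u') t 1 /\ Lop phi f h u u' t = 0}.

Definition strict_upper_solution (phi f : R -> R) (h : R -> R -> R) (T : R)
    (beta beta' : R -> R) : Prop :=
  inD phi T beta beta' /\
  {ae @lebesgue_measure R, forall t, I0T T t ->
     derivable (phi \o beta') t 1 /\ Lop phi f h beta beta' t < 0} /\
  (forall u u' : R -> R, periodic_solution phi f h T u u' ->
     (forall t, I0T T t -> u t <= beta t) ->
     forall t, I0T T t -> u t < beta t).

End Defs.

From HB Require Import structures.
From mathcomp Require Import all_boot all_order all_algebra.
From mathcomp Require Import all_classical all_reals all_analysis.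
From mathcomp Require Import ring lra measurable_realfun.
Import Order.TTheory GRing.Theory Num.Theory.
Import numFieldNormedType.Exports.
Local Open Scope classical_set_scope.
Local Open Scope ring_scope.

(* Suppose u <= beta is a periodic solution touching beta.  Then w = u - beta
   attains its maximum 0, and periodicity lets us choose the touching point t0
   in [0, T) with w'(t0) = 0 as well.  Near t0 the two equations, (A_0) and the
   continuity of f give (phi(u'))' - (phi(beta'))' > b/2 a.e.; as
   phi(u') - phi(beta') is absolutely continuous and vanishes at t0, it is
   positive on ]t0, s], so u' > beta' there and w(s) > w(t0) = 0, which is
   absurd.  That an absolutely continuous function whose a.e. derivative exceeds
   c grows at rate at least c is proved by real induction, after covering the
   exceptional null set by an open set of small measure. *)

(* Instance inference does not find [ae_filter_ringOfSetsType] by itself for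
   the carrier of [lebesgue_measure]. *)
#[local] Instance lebesgue_ae_filter {R : realType} :
  Filter (almost_everywhere (@lebesgue_measure R)) := ae_filter_ringOfSetsType _.

Section real_lemmas.
Context {R : realType}.
Implicit Types a b : R.

Lemma within_continuous_dist_lt {A : set R} {g : R -> R} {x : R} :
  {within A, continuous g} -> A x -> forall e, 0 < e ->
  exists2 d, 0 < d & forall y, A y -> `|y - x| < d -> `|g y - g x| < e.
Proof.
move=> /subspace_continuousP /[apply] gx e e0.
have : \forall y \near within A (nbhs x), `|g x - g y| < e.
  exact: (@cvgr_dist_lt _ R^o).
rewrite near_withinE => /nbhs_ballP [d d0 near_x].
exists d => // y Ay yx; rewrite distrC; apply: near_x => //.
by rewrite -ball_normE /ball_ /= distrC.
Qed.

Lemma real_induction (P : R -> Prop) a b : a <= b -> P a ->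
  (forall s, a <= s <= b -> exists2 d, 0 < d & forall y z,
     a <= y <= s -> s - d < y -> P y -> s <= z <= b -> z < s + d -> P z) ->
  P b.
Proof.
move=> ab Pa step.
pose S := [set y | a <= y <= b /\ P y].
have Sa : S a by split; rewrite ?lexx.
have supS : has_sup S by split; [exists a | exists b => y [/andP[]]].
have a_s : a <= sup S := sup_upper_bound supS Sa.
have sb : sup S <= b by apply: ge_sup; [exists a | move=> y [/andP[]]].
have [d d0 stepS] := step (sup S) (introT andP (conj a_s sb)).
have [y [/andP[ay yb] Py] sy] := sup_adherent d0 supS.
have ys : y <= sup S by apply: sup_upper_bound => //; rewrite /S /= ay yb.
have d2 : 0 < d / 2 by rewrite divr_gt0.
pose z := Num.min b (sup S + d / 2).
have sz : sup S <= z by rewrite le_min sb lerDl ltW.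
have zb : z <= b by rewrite ge_min lexx.
have Pz : P z.
  apply: (stepS y) => //; rewrite ?ay ?sz //.
  by rewrite gt_min ltrD2l ltr_pdivrMr // ltr_pMr // ltr1n orbT.
have zs : z <= sup S by apply: sup_upper_bound => //; rewrite /S /= zb (le_trans a_s).
suff -> : b = z by [].
move: zs; rewrite ge_min => /orP[bs|]; first by apply/le_anti; rewrite zb (le_trans bs).
by rewrite gerDl leNgt d2.
Qed.

Lemma is_derive_gt0_lt (w dw : R -> R) x y : x < y ->
  {within `[x, y], continuous w} ->
  (forall z, x < z < y -> is_derive z 1 w (dw z)) ->
  (forall z, x < z < y -> 0 < dw z) -> w x < w y.
Proof.
move=> xy wc wd dw_gt0.
have [z] : exists2 z, z \in `]x, y[ & w y - w x = dw z * (y - x).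
  by apply: MVT xy _ wc => z; rewrite in_itv; exact: wd.
rewrite in_itv /= => /dw_gt0 dwz /eqP; rewrite subr_eq => /eqP ->.
by rewrite ltrDr mulr_gt0 // subr_gt0.
Qed.

Lemma is_derive_lt0_gt (w dw : R -> R) x y : x < y ->
  {within `[x, y], continuous w} ->
  (forall z, x < z < y -> is_derive z 1 w (dw z)) ->
  (forall z, x < z < y -> dw z < 0) -> w y < w x.
Proof.
move=> xy wc wd dw_lt0.
have [z] : exists2 z, z \in `]x, y[ & w y - w x = dw z * (y - x).
  by apply: MVT xy _ wc => z; rewrite in_itv; exact: wd.
rewrite in_itv /= => /dw_lt0 dwz /eqP; rewrite subr_eq => /eqP ->.
by rewrite gtrDr pmulr_llt0 // subr_gt0.
Qed.

End real_lemmas.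

Section rate_bound.
Context {R : realType}.
Implicit Types (U : set R) (a b c y z : R) (k : R -> R).
Local Notation mu := (@lebesgue_measure R).

Lemma derive1_gt_increment {k s c} : derivable k s 1 -> c < derive1 k s ->
  exists2 d, 0 < d & forall y z,
    s - d < y <= s -> s <= z < s + d -> c * (z - y) <= k z - k y.
Proof.
move=> dk ck.
have quot_cvg : (fun h => h^-1 * (k (h + s) - k s)) @ 0^' --> derive1 k s.
  by move: dk; rewrite /derivable /derive1; under eq_fun do rewrite [_%:A]mulr1.
have /(_ _)/nbhs_ballP [d d0 quot_gt] := cvgr_gt _ quot_cvg _ ck.
have quot x : 0 < `|x - s| < d -> c < (k x - k s) / (x - s).
  move=> /andP[xs0 xsd]; have := quot_gt (x - s).
  rewrite -ball_normE /ball_ /= sub0r normrN subrK mulrC.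
  by apply; rewrite // -normr_gt0.
have right z : s <= z < s + d -> c * (z - s) <= k z - k s.
  move=> /andP[sz zsd]; have [->|zs] := eqVneq z s; first by rewrite !subrr mulr0.
  have sz' : s < z by rewrite lt_neqAle eq_sym zs.
  have := quot z; rewrite ltr_pdivlMr ?subr_gt0 // => quot_zs; apply/ltW/quot_zs.
  by rewrite gtr0_norm ?subr_gt0 // sz' /=; lra.
have left y : s - d < y <= s -> c * (s - y) <= k s - k y.
  move=> /andP[syd ys]; have [->|ys'] := eqVneq y s; first by rewrite !subrr mulr0.
  have ys'' : y < s by rewrite lt_neqAle ys' ys.
  have := quot y; rewrite -[y - s]opprB -[k y - k s]opprB invrN mulrNN.
  rewrite ltr_pdivlMr ?subr_gt0 // => quot_zs; apply/ltW/quot_zs.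
  by rewrite normrN gtr0_norm ?subr_gt0 // ys'' /=; lra.
exists d => // y z ys sz.
have := left y ys; have := right z sz; rewrite !mulrBr; lra.
Qed.

Lemma negligible_open_cover {N : set R} {e : R} : mu.-negligible N -> 0 < e ->
  exists U, [/\ open U, N `<=` U & (mu U <= e%:E)%E].
Proof.
move=> /negligible_outer_measure N0 e0.
by have [U [oU NU]] := outer_measure_open_le N e0; rewrite N0 add0e; exists U.
Qed.

Lemma lebesgue_measure_setI_itv U a y z : measurable U -> a <= y -> y <= z ->
  `]y, z] `<=` U -> (mu (U `&` `]a, y]) + (z - y)%:E <= mu (U `&` `]a, z]))%E.
Proof.
move=> mU ay yz yzU.
have mUa x : measurable (U `&` `]a, x]).
  by apply: measurableI => //; exact: measurable_itv.
have disj : (U `&` `]a, y]) `&` `]y, z] = set0.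
  apply/seteqP; split => // x /= [[_]]; rewrite !in_itv /= => /andP[_ xy] /andP[yx _].
  lra.
have muyz : mu `]y, z] = (z - y)%:E.
  rewrite lebesgue_measure_itv /= lte_fin; case: ifPn => [_|]; first by rewrite EFinB.
  rewrite -leNgt => zy; have -> : z = y by apply/le_anti; rewrite zy yz.
  by rewrite subrr.
rewrite -muyz -(measureU mu (mUa y) (measurable_itv _) disj).
apply: le_measure; rewrite ?inE.
- exact: measurableU (mUa y) (measurable_itv _).
- exact: mUa.
- move=> x /= [[Ux]|]; rewrite !in_itv /= => /andP[lx xr].
    by split => //; apply/andP; split => //; lra.
  split; first by apply: yzU; rewrite /= in_itv /= lx xr.
  by apply/andP; split => //; lra.
Qed.

(* k grows at rate c on [a, y], except on finitely many ordered intervals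
   [p i, q i] whose total length is at most the measure of U `&` ]a, y]. *)
Definition rate_bound_off U k a c y : Prop :=
  exists n (p q : nat -> R),
   [/\ forall i, (i < n)%N -> a <= p i /\ p i <= q i /\ q i <= y,
       forall i, (i.+1 < n)%N -> q i <= p i.+1,
       ((\sum_(i < n) (q i - p i))%:E <= mu (U `&` `]a, y]))%E &
       c * (y - a) - c * (\sum_(i < n) (q i - p i))
         - \sum_(i < n) `|k (q i) - k (p i)| <= k y - k a].

Lemma rate_bound_off_refl U k a c : rate_bound_off U k a c a.
Proof.
exists 0%N, (fun=> 0), (fun=> 0); split => //; rewrite !big_ord0.
  exact: measure_ge0.
by rewrite !subrr; lra.
Qed.

Lemma rate_bound_off_extend U k a c y z : measurable U ->
  rate_bound_off U k a c y -> y <= z -> c * (z - y) <= k z - k y ->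
  rate_bound_off U k a c z.
Proof.
move=> mU [n [p [q [pq_in pq_sorted pq_len kya]]]] yz kzy.
exists n, p, q; split => //.
- by move=> i /pq_in [? [? qy]]; do 2!split => //; exact: le_trans qy yz.
- apply: (le_trans pq_len); apply: le_measure; rewrite ?inE.
  + by apply: measurableI => //; exact: measurable_itv.
  + by apply: measurableI => //; exact: measurable_itv.
  + apply: setIS => x /=; rewrite !in_itv /= => /andP[-> xy] /=; lra.
- by move: kya kzy; rewrite !mulrBr; lra.
Qed.

Lemma rate_bound_off_skip U k a c y z : measurable U ->
  rate_bound_off U k a c y -> a <= y -> y <= z -> `]y, z] `<=` U ->
  rate_bound_off U k a c z.
Proof.
move=> mU [n [p [q [pq_in pq_sorted pq_len kya]]]] ay yz yzU.
exists n.+1, (fun i => if i == n then y else p i), (fun i => if i == n then z else q i).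
rewrite !big_ord_recr /= eqxx.
under eq_bigr => i _ do rewrite ltn_eqF //.
under [X in _ - (X + _) <= _]eq_bigr => i _ do rewrite ltn_eqF //.
split.
- move=> i; rewrite ltnS leq_eqVlt => /orP[/eqP->|iln]; first by rewrite eqxx.
  by rewrite ltn_eqF //; have [? [? ?]] := pq_in i iln; do 2!split => //; lra.
- move=> i; rewrite ltnS => iln; rewrite ltn_eqF //.
  case: eqP => [_|/eqP ne]; first by have [_ []] := pq_in i iln.
  by apply: pq_sorted; rewrite ltn_neqAle ne iln.
- rewrite EFinD; apply: le_trans (leeD pq_len (lexx _)) _.
  exact: lebesgue_measure_setI_itv.
- by have := ler_norm (k y - k z); rewrite distrC; move: kya; lra.
Qed.

Lemma rate_bound_off_derive U k a b c : a <= b -> open U ->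
  (forall s, a <= s <= b -> ~ U s -> derivable k s 1 /\ c < derive1 k s) ->
  rate_bound_off U k a c b.
Proof.
move=> ab oU kd; have mU := open_measurable oU.
apply: real_induction ab (rate_bound_off_refl _ _ _ _) _ => s asb.
have [Us|nUs] := pselect (U s).
- have /nbhs_ballP [d d0 ballU] := oU s Us.
  exists d => // y z /andP[ay ys] syd Py /andP[sz _] zsd.
  apply: rate_bound_off_skip mU Py ay (le_trans ys sz) _ => x /=.
  rewrite in_itv /= => /andP[yx xz]; apply: ballU.
  by rewrite -ball_normE /ball_ /= ltr_norml; apply/andP; split; lra.
- have [dk ck] := kd s asb nUs.
  have [d d0 inc] := derive1_gt_increment dk ck.
  exists d => // y z /andP[_ ys] syd Py /andP[sz _] zsd.
  by apply: rate_bound_off_extend mU Py (le_trans ys sz) (inc y z _ _); rewrite ?syd ?sz.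
Qed.

Lemma lebesgue_negligible_set1 x : mu.-negligible [set x].
Proof. by apply/negligibleP => //; exact: lebesgue_measure_set1. Qed.

Lemma abs_cont_on_increment_ge {T : R} {k a b c} :
  0 <= a -> a < b -> b <= T -> abs_cont_on T k ->
  {ae mu, forall x, a < x < b -> derivable k x 1 /\ c < derive1 k x} ->
  c * (b - a) <= k b - k a.
Proof.
move=> a0 ab bT kac kd.
suff approx e : 0 < e -> c * (b - a) - (`|c| + 1) * e <= k b - k a.
  apply/ler_addgt0Pr => e e0; have c1 : 0 < `|c| + 1 by have := normr_ge0 c; lra.
  have := approx (e / (`|c| + 1)) (divr_gt0 e0 c1).
  by rewrite [(`|c| + 1) * _]mulrC divfK ?gt_eqF //; lra.
move=> e0; have [d d0 kd_small] := kac e e0.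
pose m := Num.min d e; have m0 : 0 < m by rewrite lt_min d0 e0.
have [md me] : m <= d /\ m <= e by split; rewrite ge_min lexx ?orbT.
pose E := ~` [set x | a < x < b -> derivable k x 1 /\ c < derive1 k x] `|` [set a; b].
have nE : mu.-negligible E.
  apply: negligibleU; first exact: kd.
  by apply: negligibleU; exact: lebesgue_negligible_set1.
have m2 : 0 < m / 2 by rewrite divr_gt0.
have [U [oU EU muU]] := negligible_open_cover nE m2.
have [n [p [q [pq_in pq_sorted pq_len kba]]]] : rate_bound_off U k a c b.
  apply: rate_bound_off_derive (ltW ab) oU _ => s /andP[a_s sb] nUs.
  have nEs : ~ E s by move/EU.
  have sa : s != a by apply/eqP => es; apply: nEs; right; left.
  have sb' : s != b by apply/eqP => es; apply: nEs; right; right.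
  have sab : a < s < b by rewrite !lt_neqAle a_s sb eq_sym sa sb'.
  by apply: contrapT => nd; apply: nEs; left => /(_ sab).
have len_ge0 : 0 <= \sum_(i < n) (q i - p i).
  by apply: sumr_ge0 => i _; have [_ [? _]] := pq_in i (ltn_ord i); rewrite subr_ge0.
have len_small : \sum_(i < n) (q i - p i) <= m / 2.
  rewrite -lee_fin (le_trans pq_len) // (le_trans _ muU) //.
  apply: le_measure; rewrite ?inE; [|exact: open_measurable|exact: subIsetl].
  by apply: measurableI; [exact: open_measurable|exact: measurable_itv].
have var_small : \sum_(i < n) `|k (q i) - k (p i)| < e.
  apply: kd_small => //; last lra.
  by move=> i /pq_in [? [? ?]]; split; [lra|split => //; lra].
have : c * \sum_(i < n) (q i - p i) <= `|c| * e.
  rewrite (le_trans (ler_norm _)) // normrM (ger0_norm len_ge0).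
  by apply: ler_wpM2l; [exact: normr_ge0|lra].
by move: kba; rewrite mulrDl mul1r; lra.
Qed.

End rate_bound.

Lemma abs_cont_onB {R : realType} (T : R) (g1 g2 : R -> R) :
  abs_cont_on T g1 -> abs_cont_on T g2 -> abs_cont_on T (g1 - g2).
Proof.
move=> g1ac g2ac e e0.
have [d1 d10 g1small] := g1ac _ (divr_gt0 e0 (ltr0n _ 2)).
have [d2 d20 g2small] := g2ac _ (divr_gt0 e0 (ltr0n _ 2)).
exists (Num.min d1 d2) => [|n a b ab_in ab_sorted]; first by rewrite lt_min d10 d20.
rewrite lt_min => /andP[l1 l2].
have := g1small n a b ab_in ab_sorted l1; have := g2small n a b ab_in ab_sorted l2.
suff : \sum_(i < n) `|(g1 - g2) (b i) - (g1 - g2) (a i)| <=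
   \sum_(i < n) `|g1 (b i) - g1 (a i)| + \sum_(i < n) `|g2 (b i) - g2 (a i)|.
  lra.
rewrite -big_split /=; apply: ler_sum => i _.
have -> : (g1 - g2) (b i) - (g1 - g2) (a i) =
    (g1 (b i) - g1 (a i)) - (g2 (b i) - g2 (a i)) by rewrite !fctE /=; ring.
exact: ler_normB.
Qed.

Section deviation.
Context {R : realType} {T : R} {w dw : R -> R}.
Hypothesis wc : {within I0T T, continuous w}.
Hypothesis dwc : {within I0T T, continuous dw}.
Hypothesis wd : forall t, 0 < t < T -> is_derive t 1 w (dw t).

Lemma deviation_lt {x y : R} : 0 <= x -> x < y -> y <= T ->
  (forall z, x < z < y -> 0 < dw z) -> w x < w y.
Proof.
move=> x0 xy yT; apply: is_derive_gt0_lt => //.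
  apply: continuous_subspaceW wc => z /=; rewrite in_itv /= => /andP[xz zy].
  by rewrite /I0T /=; apply/andP; split; lra.
by move=> z /andP[xz zy]; apply: wd; apply/andP; split; lra.
Qed.

Lemma deviation_gt {x y : R} : 0 <= x -> x < y -> y <= T ->
  (forall z, x < z < y -> dw z < 0) -> w y < w x.
Proof.
move=> x0 xy yT; apply: is_derive_lt0_gt => //.
  apply: continuous_subspaceW wc => z /=; rewrite in_itv /= => /andP[xz zy].
  by rewrite /I0T /=; apply/andP; split; lra.
by move=> z /andP[xz zy]; apply: wd; apply/andP; split; lra.
Qed.

Hypothesis w_le0 : forall t, I0T T t -> w t <= 0.

Lemma deviation_max_right t0 : 0 <= t0 < T -> w t0 = 0 -> dw t0 <= 0.
Proof.
move=> /andP[t00 t0T] w0; rewrite leNgt; apply/negP => dw0.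
have [eta eta0 dw_near] :=
  within_continuous_dist_lt dwc (introT andP (conj t00 (ltW t0T))) _ dw0.
pose s := Num.min T (t0 + eta / 2).
have [t0s sT ss] : [/\ t0 < s, s <= T & s <= t0 + eta / 2].
  by split; rewrite ?lt_min ?t0T ?ltrDl ?divr_gt0 // ge_min lexx ?orbT.
have : w t0 < w s.
  apply: deviation_lt => // z /andP[t0z zs].
  have /dw_near : `|z - t0| < eta by rewrite ger0_norm; lra.
  by rewrite ltr_norml => /(_ _)/andP[]; [rewrite /I0T /=; apply/andP; split; lra|lra].
by rewrite w0 ltNge w_le0 // /I0T /= sT andbT; lra.
Qed.

Lemma deviation_max_left t0 : 0 < t0 <= T -> w t0 = 0 -> 0 <= dw t0.
Proof.
move=> /andP[t00 t0T] w0; rewrite leNgt; apply/negP => dw0.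
have ndw0 : 0 < - dw t0 by rewrite oppr_gt0.
have [eta eta0 dw_near] :=
  within_continuous_dist_lt dwc (introT andP (conj (ltW t00) t0T)) _ ndw0.
pose s := Num.max 0 (t0 - eta / 2).
have [st0 s0 ss] : [/\ s < t0, 0 <= s & t0 - eta / 2 <= s].
  by split; rewrite ?gt_max ?t00 ?gtrDl ?oppr_lt0 ?divr_gt0 // le_max lexx ?orbT.
have : w t0 < w s.
  apply: deviation_gt => // z /andP[sz zt0].
  have /dw_near : `|z - t0| < eta by rewrite ltr0_norm ?subr_lt0 //; lra.
  by rewrite ltr_norml => /(_ _)/andP[]; [rewrite /I0T /=; apply/andP; split; lra|lra].
by rewrite w0 ltNge w_le0 // /I0T /= s0; lra.
Qed.

Lemma deviation_max_periodic {t1 : R} : 0 < T -> w 0 = w T -> dw 0 = dw T ->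
  I0T T t1 -> w t1 = 0 -> exists t0, [/\ 0 <= t0 < T, w t0 = 0 & dw t0 = 0].
Proof.
move=> T0 wT dwT /andP[t10 t1T] w1.
have max0 : w 0 = 0 -> dw 0 = 0.
  move=> w00; apply/le_anti; rewrite deviation_max_right ?lexx ?T0 //=.
  by rewrite dwT deviation_max_left ?T0 ?lexx // -wT.
have [t1T'|Tt1] := ltP t1 T; last first.
  have w00 : w 0 = 0 by rewrite wT -w1; congr w; apply/le_anti; rewrite t1T Tt1.
  by exists 0; split; rewrite ?lexx ?T0 ?max0.
have [t1_0|t1le0] := ltP 0 t1; last first.
  have w00 : w 0 = 0 by rewrite -[RHS]w1; congr w; apply/le_anti; rewrite t10 t1le0.
  by exists 0; split; rewrite ?lexx ?T0 ?max0.
exists t1; split; rewrite ?t10 ?t1T' //.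
by apply/le_anti; rewrite deviation_max_right ?t10 ?t1T' ?deviation_max_left ?t1_0.
Qed.

End deviation.

Section touching.
Context {R : realType} {T b : R} {phi f : R -> R} {h : R -> R -> R}.
Context {u u' beta beta' : R -> R}.
Local Notation mu := (@lebesgue_measure R).
Local Notation G := ((phi \o u') - (phi \o beta')).
Hypothesis fc : continuous f.
Hypothesis hA0 : condA0 T h.
Hypothesis u_sol : periodic_solution phi f h T u u'.
Hypothesis beta_D : inD phi T beta beta'.
Hypothesis beta_sup : {ae mu, forall t, I0T T t ->
  derivable (phi \o beta') t 1 /\ Lop phi f h beta beta' t <= - b}.

Lemma touching_phi_derive_gt {t0 c : R} :
  I0T T t0 -> u t0 = beta t0 -> u' t0 = beta' t0 -> c < b ->
  exists2 eta, 0 < eta & {ae mu, forall x, I0T T x -> `|x - t0| < eta ->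
    derivable G x 1 /\ c < derive1 G x}.
Proof.
move: u_sol beta_D => [[[uc [u'c _]] _] u_ae] [[bc [b'c _]] _] At0 ut0 u't0 cb.
pose e := (b - c) / 3; have e0 : 0 < e by rewrite divr_gt0 // subr_gt0.
have ce : c = b - 3 * e by rewrite /e; field.
have [del del0 h_near] := hA0 _ (beta t0) _ At0 e0.
have [eta1 eta10 u_near] := within_continuous_dist_lt uc At0 _ del0.
have [eta2 eta20 b_near] := within_continuous_dist_lt bc At0 _ del0.
pose F t := f (beta t) * beta' t - f (u t) * u' t.
have Fc : {within I0T T, continuous F}.
  move=> x; apply: cvgB; apply: cvgM; [|exact: b'c| |exact: u'c].
    by apply: continuous_cvg; [exact: fc|exact: bc].
  by apply: continuous_cvg; [exact: fc|exact: uc].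
have [eta3 eta30 F_near] := within_continuous_dist_lt Fc At0 _ e0.
exists (Num.min (Num.min eta1 eta2) (Num.min eta3 del)).
  by rewrite !lt_min eta10 eta20 eta30 del0.
apply: filterS3 u_ae beta_sup h_near => x usol bsup hx Ax.
rewrite !lt_min => /andP[/andP[x1 x2] /andP[x3 xd]].
have [[du Lu] [db Lb]] := (usol Ax, bsup Ax).
split; first exact: derivableB.
rewrite derive1E deriveB // -!derive1E.
have hu : `|h x (u x) - h x (beta t0)| < e.
  by apply: hx => //; rewrite -ut0; exact: u_near.
have hb := hx Ax (beta x) xd (b_near x Ax x2).
have hF := F_near x Ax x3.
by move: Lu Lb hu hb hF; rewrite /Lop /F ut0 u't0 !ltr_norml; lra.
Qed.

Lemma touching_derivative_gt {t0 : R} : {homo phi : x y / x < y} -> 0 < b ->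
  0 <= t0 < T -> u t0 = beta t0 -> u' t0 = beta' t0 ->
  exists2 s, t0 < s <= T & forall z, t0 < z <= s -> beta' z < u' z.
Proof.
move=> phi_incr b0 /andP[t00 t0T] ut0 u't0.
have At0 : I0T T t0 by rewrite /I0T /= t00 ltW.
have b2 : b / 2 < b by lra.
have [eta eta0 G_ae] := touching_phi_derive_gt At0 ut0 u't0 b2.
have G_ac : abs_cont_on T G by apply: abs_cont_onB; [exact: u_sol.1.2|exact: beta_D.2].
pose s := Num.min T (t0 + eta / 2).
have [t0s sT ss] : [/\ t0 < s, s <= T & s <= t0 + eta / 2].
  by split; rewrite ?lt_min ?t0T ?ltrDl ?divr_gt0 // ge_min lexx ?orbT.
exists s => [|z /andP[t0z zs]]; first by rewrite t0s sT.
have zT : z <= T := le_trans zs sT.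
have G_ae' : {ae mu, forall x, t0 < x < z -> derivable G x 1 /\ b / 2 < derive1 G x}.
  apply: filterS G_ae => x Gx /andP[t0x xz]; apply: Gx.
    by rewrite /I0T /=; apply/andP; split; lra.
  by rewrite gtr0_norm ?subr_gt0 //; lra.
have := abs_cont_on_increment_ge t00 t0z zT G_ac G_ae'.
rewrite !fctE /= u't0 subrr subr0 -(leW_mono (le_mono phi_incr)).
have : 0 < b / 2 * (z - t0) by rewrite mulr_gt0 ?divr_gt0 ?subr_gt0.
lra.
Qed.

End touching.

Theorem lemma2p2 (R : realType) (T : R) (phi f : R -> R) (h : R -> R -> R)
    (b : R) (beta beta' : R -> R) :
  0 < T ->
  incr_homeo_0 phi ->
  continuous f ->
  Caratheodory T h ->
  condA0 T h ->
  0 < b ->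
  inD phi T beta beta' ->
  {ae @lebesgue_measure R, forall t, I0T T t ->
     derivable (phi \o beta') t 1 /\ Lop phi f h beta beta' t <= - b} ->
  strict_upper_solution phi f h T beta beta'.
Proof.
move=> T0 [phi_incr _] fc _ hA0 b0 beta_D beta_sup.
split => //; split.
  by apply: filterS beta_sup => t bt /bt [db Lb]; split => //; lra.
move=> u u' u_sol u_le t1 At1.
have [[[uc [u'c [ud [u0T u'0T]]]] _] _] := u_sol.
have [[bc [b'c [bd [b0T b'0T]]]] _] := beta_D.
rewrite lt_neqAle u_le // andbT; apply/eqP => ut1.
have wc : {within I0T T, continuous (u - beta)} by exact: within_continuousB.
have dwc : {within I0T T, continuous (u' - beta')} by exact: within_continuousB.
have wd t : 0 < t < T -> is_derive t 1 (u - beta) ((u' - beta') t).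
  by move=> tT; exact: is_deriveB (ud t tT) (bd t tT).
have w_le0 t : I0T T t -> (u - beta) t <= 0 by move=> At; rewrite !fctE subr_le0 u_le.
have wT : (u - beta) 0 = (u - beta) T by rewrite !fctE /= u0T b0T.
have dwT : (u' - beta') 0 = (u' - beta') T by rewrite !fctE /= u'0T b'0T.
have w1 : (u - beta) t1 = 0 by rewrite !fctE /= ut1 subrr.
have [t0 [t0T /eqP wt0 /eqP dwt0]] :=
  deviation_max_periodic wc dwc wd w_le0 T0 wT dwT At1 w1.
move: wt0 dwt0; rewrite !fctE /= !subr_eq0 => /eqP ut0 /eqP u't0.
have [s /andP[t0s sT] dw_gt0] := touching_derivative_gt fc hA0 u_sol beta_D beta_sup
  phi_incr b0 t0T ut0 u't0.
have w_incr : (u - beta) t0 < (u - beta) s.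
  apply: (deviation_lt wc wd (andP t0T).1 t0s sT) => z /andP[t0z zs].
  by rewrite !fctE /= subr_gt0 dw_gt0 // t0z ltW.
have As : I0T T s by rewrite /I0T /= sT (le_trans (andP t0T).1 (ltW t0s)).
by move: w_incr (w_le0 s As); rewrite !fctE /= ut0; lra.
Qed.
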